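(* Let $T$ be a monad on $\mathsf{Set}$ and $(A,e)$ a $T$-algebra. Then $(A,e)$ is indiscrete if and only if the partial evaluation relation on $TA$ is an equivalence relation. In this case, this equivalence relation is the kernel pair of $e:TA\to A$, i.e. $t_0$ partially evaluates to $t_1$ if and only if $e(t_0)=e(t_1)$.
   Context: A $T$-algebra $(A,e)$ is indiscrete if its algebra square, with maps $\mu_A:TTA\to TA$, $Te:TTA\to TA$ and $e:TA\to A$ on both remaining sides, is a weak pullback: for all $t_0,t_1\in TA$ with $e(t_0)=e(t_1)$ there is $\tau\in TTA$ with $\mu_A(\tau)=t_0$ and $(Te)(\tau)=t_1$. For $t_0,t_1\in TA$, $t_0$ partially evaluates to $t_1$ if there is $\tau\in TTA$ with $\mu_A(\tau)=t_0$ and $(Te)(\tau)=t_1$; the partial evaluation relation is the set of such pairs. *)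

(* monads on Set, modelled as monads on the category of types
   (Type with functions), with extensional equations. *)
From Stdlib Require Import Relations.

Set Implicit Arguments.

Record Monad : Type := {
  T :> Type -> Type;
  fmap : forall (X Y : Type), (X -> Y) -> T X -> T Y;
  eta : forall X : Type, X -> T X;
  mu : forall X : Type, T (T X) -> T X;
  fmap_id : forall X (t : T X), fmap (fun x => x) t = t;
  fmap_comp : forall X Y Z (f : X -> Y) (g : Y -> Z) (t : T X),
      fmap (fun x => g (f x)) t = fmap g (fmap f t);
  eta_nat : forall X Y (f : X -> Y) (x : X), fmap f (eta x) = eta (f x);
  mu_nat : forall X Y (f : X -> Y) (t : T (T X)),
      fmap f (mu t) = mu (fmap (fmap f) t);
  mu_eta_l : forall X (t : T X), mu (eta t) = t;
  mu_eta_r : forall X (t : T X), mu (fmap (@eta X) t) = t;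
  mu_assoc : forall X (t : T (T (T X))), mu (mu t) = mu (fmap (@mu X) t)
}.

Arguments fmap {m X Y} _ _.
Arguments eta {m X} _.
Arguments mu {m X} _.

Definition is_algebra (M : Monad) (A : Type) (e : M A -> A) : Prop :=
  (forall a : A, e (eta a) = a) /\
  (forall tt : M (M A), e (mu tt) = e (fmap e tt)).

Definition partially_evaluates (M : Monad) (A : Type) (e : M A -> A)
    (t0 t1 : M A) : Prop :=
  exists tau : M (M A), mu tau = t0 /\ fmap e tau = t1.

(** Indiscrete algebra: the algebra square is a weak pullback. *)
Definition indiscrete (M : Monad) (A : Type) (e : M A -> A) : Prop :=
  forall t0 t1 : M A, e t0 = e t1 -> partially_evaluates M e t0 t1.

(* Partial evaluation always lies inside the kernel pair of [e], by the
   multiplication law of the algebra, so indiscreteness says precisely that the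
   two relations coincide, and the kernel pair is an equivalence.  Conversely,
   every [t] partially evaluates to [eta (e t)] (via [eta t]); hence if partial
   evaluation is symmetric and transitive, [e t0 = e t1] lets us pass
   [t0 -> eta (e t0) = eta (e t1) <- t1]. *)

From Stdlib Require Import Relations.

Section PartialEvaluation.

Variables (M : Monad) (A : Type) (e : M A -> A).

Lemma partially_evaluates_eta (t : M A) :
  partially_evaluates M e t (eta (e t)).
Proof.
  exists (eta t); split.
  - apply mu_eta_l.
  - apply eta_nat.
Qed.

Lemma equivalence_partially_evaluates_indiscrete :
  equivalence (M A) (partially_evaluates M e) -> indiscrete M e.
Proof.
  intros [_ Htrans Hsym] t0 t1 Heq.
  apply Htrans with (eta (e t0)); [apply partially_evaluates_eta |].
  rewrite Heq; apply Hsym, partially_evaluates_eta.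
Qed.

Hypothesis Halg : is_algebra M e.

Lemma partially_evaluates_ker (t0 t1 : M A) :
  partially_evaluates M e t0 t1 -> e t0 = e t1.
Proof.
  intros [tau [<- <-]]; apply (proj2 Halg).
Qed.

Lemma indiscrete_partially_evaluatesE :
  indiscrete M e -> forall t0 t1 : M A, partially_evaluates M e t0 t1 <-> e t0 = e t1.
Proof.
  intros Hind t0 t1; split; [apply partially_evaluates_ker | apply Hind].
Qed.

Lemma indiscrete_equivalence_partially_evaluates :
  indiscrete M e -> equivalence (M A) (partially_evaluates M e).
Proof.
  intros Hind.
  pose proof (indiscrete_partially_evaluatesE Hind) as HE.
  split.
  - intros t; apply HE; reflexivity.
  - intros x y z Hxy Hyz; apply HE.
    rewrite (proj1 (HE _ _) Hxy); apply HE, Hyz.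
  - intros x y Hxy; apply HE; symmetry; apply HE, Hxy.
Qed.

End PartialEvaluation.

Theorem proposition3p8 (M : Monad) (A : Type) (e : M A -> A)
    (Halg : is_algebra M e) :
  (indiscrete M e <-> equivalence (M A) (partially_evaluates M e)) /\
  (indiscrete M e ->
     forall t0 t1 : M A, partially_evaluates M e t0 t1 <-> e t0 = e t1).
Proof.
  split; [split |].
  - apply indiscrete_equivalence_partially_evaluates, Halg.
  - apply equivalence_partially_evaluates_indiscrete.
  - apply indiscrete_partially_evaluatesE, Halg.
Qed.
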